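(* Let $p(\cdot\mid z)$, $z\in\mathcal{Z}^{\times}$, be an additive energy distribution (AED) family with energy map $E:\mathbb{R}^n\to\mathbb{R}^{md}$, i.e. $p(x\mid z)=\frac{1}{\mathbb{Z}(z)}\exp(-\langle\sigma(z),E(x)\rangle)$ with $\mathbb{Z}(z)=\int\exp(-\langle\sigma(z),E(x)\rangle)\,dx<\infty$. Let $\hat E:\mathbb{R}^n\to\mathbb{R}^{md}$ be another map with $\hat{\mathbb{Z}}(z)=\int\exp(-\langle\sigma(z),\hat E(x)\rangle)\,dx<\infty$ for all $z\in\mathcal{Z}^{\times}$, and define the learned AED $\hat p(x\mid z)=\frac{1}{\hat{\mathbb{Z}}(z)}\exp(-\langle\sigma(z),\hat E(x)\rangle)$ for all $z\in\mathcal{Z}^{\times}$. If $\hat p(\cdot\mid z)=p(\cdot\mid z)$ for all $z\in\mathcal{Z}^{\mathsf{train}}$, then $\hat p(\cdot\mid z')=p(\cdot\mid z')$ for all $z'\in\mathsf{DAff}(\mathcal{Z}^{\mathsf{train}})$.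
   Context: An attribute vector is $z=(z_1,\dots,z_m)$ with each $z_i\in\{1,\dots,d\}$; $\mathcal{Z}=\{1,\dots,d\}^m$. For $z\in\mathcal{Z}$, $\sigma(z)\in\{0,1\}^{md}$ denotes the concatenation of the one-hot encodings of $z_1,\dots,z_m$. For a finite set $\mathcal{A}=\{z^{(1)},\dots,z^{(k)}\}\subseteq\mathcal{Z}$, its discrete affine hull is $\mathsf{DAff}(\mathcal{A})=\{z\in\mathcal{Z}:\exists\alpha\in\mathbb{R}^k,\ \sum_i\alpha_i=1,\ \sigma(z)=\sum_{i=1}^k\alpha_i\sigma(z^{(i)})\}$. There is a training distribution $p(x,z)=p(z)p(x\mid z)$ on $\mathbb{R}^n\times\mathcal{Z}$; $\mathcal{Z}^{\mathsf{train}}$ is the support of $p(z)$, $\mathcal{Z}_i^{\mathsf{train}}$ is the set of values taken by the $i$-th coordinate on $\mathcal{Z}^{\mathsf{train}}$, and $\mathcal{Z}^{\times}=\mathcal{Z}_1^{\mathsf{train}}\times\cdots\times\mathcal{Z}_m^{\mathsf{train}}$. The densities $p(\cdot\mid z)$ are assumed to have support $\mathbb{R}^n$ for every $z\in\mathcal{Z}^{\times}$. *)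

From HB Require Import structures.
From mathcomp Require Import all_boot all_order all_algebra.
From mathcomp Require Import all_classical all_reals all_analysis.
Set Implicit Arguments. Unset Strict Implicit. Unset Printing Implicit Defensive.
Import Order.TTheory GRing.Theory Num.Theory.
Local Open Scope ring_scope.
Local Open Scope classical_set_scope.

(* - The attribute values {1,...,d} are represented by 'I_d = {0,...,d-1}.
   - An attribute vector z in {1..d}^m is an element of {ffun 'I_m -> 'I_d}.
   - A vector of R^{md} is indexed by pairs (i,k) : 'I_m * 'I_d, i.e. it is a
     function 'I_m -> 'I_d -> R (block i = one-hot slot of coordinate i).
   - R^n is n.-tuple R with its canonical (product/Borel) sigma-algebra. *)

Notation attr m d := {ffun 'I_m -> 'I_d}.

Definition onehot {R : realType} {m d : nat} (z : attr m d) : 'I_m -> 'I_d -> R :=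
  fun i k => (z i == k)%:R.

Definition ip {R : realType} {m d : nat} (u v : 'I_m -> 'I_d -> R) : R :=
  \sum_(i < m) \sum_(k < d) u i k * v i k.

Definition Zcross {m d : nat} (Ztrain : {set attr m d}) : {set attr m d} :=
  [set z : attr m d | [forall i : 'I_m, [exists w : attr m d, (w \in Ztrain) && (w i == z i)]]].

Definition DAff {R : realType} {m d : nat} (A : {set attr m d}) : set (attr m d) :=
  [set z | exists alpha : attr m d -> R,
      \sum_(w in A) alpha w = 1 /\
      forall i k, onehot z i k = \sum_(w in A) alpha w * onehot w i k].

Definition box {R : realType} {n : nat} (a b : n.-tuple R) : set (n.-tuple R) :=
  [set x | forall i : 'I_n, tnth a i <= tnth x i < tnth b i].

Definition is_lebesgue {R : realType} {n : nat}
    (mu : {measure set (n.-tuple R) -> \bar R}) : Prop :=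
  forall a b : n.-tuple R, (forall i, tnth a i <= tnth b i) ->
    mu (box a b) = (\prod_(i < n) (tnth b i - tnth a i))%:E.

Definition partZ {R : realType} {n m d : nat}
    (mu : {measure set (n.-tuple R) -> \bar R})
    (E : n.-tuple R -> 'I_m -> 'I_d -> R) (z : attr m d) : \bar R :=
  (\int[mu]_x (expR (- ip (onehot z) (E x)))%:E)%E.

Definition aed {R : realType} {n m d : nat}
    (mu : {measure set (n.-tuple R) -> \bar R})
    (E : n.-tuple R -> 'I_m -> 'I_d -> R) (z : attr m d) (x : n.-tuple R) : R :=
  (fine (partZ mu E z))^-1 * expR (- ip (onehot z) (E x)).

From HB Require Import structures.
From mathcomp Require Import all_boot all_order all_algebra.
From mathcomp Require Import all_classical all_reals all_analysis.
From mathcomp Require Import measurable_realfun.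
Import Order.TTheory GRing.Theory Num.Theory.
Local Open Scope ring_scope.
Local Open Scope classical_set_scope.

(* Two AEDs agree at z exactly when their energies <sigma(z), E x> differ by a
   constant c_z, the log-ratio of the partition functions.  The energy is
   linear in sigma(z), so if sigma(z') = sum_w alpha_w sigma(w) over training
   attributes w, the energies at z' differ by the constant sum_w alpha_w c_w,
   which normalisation absorbs. *)

Lemma fine_pEFinMl (R : realType) (k : R) (x : \bar R) :
  0 < k -> fine (k%:E * x)%E = k * fine x.
Proof.
move=> k_gt0; case: x => [r||] //=.
  by rewrite gt0_muley ?lte_fin // mulr0.
by rewrite gt0_muleNy ?lte_fin // mulr0.
Qed.

Lemma integral_gt0 d (T : measurableType d) (R : realType)
    (mu : {measure set T -> \bar R}) (f : T -> R) :
  measurable_fun setT (fun x => (f x)%:E) -> (forall x, 0 < f x) -> mu setT != 0%E ->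
  (0 < \int[mu]_x (f x)%:E)%E.
Proof.
move=> mf f_gt0 muT_neq0; rewrite lt0e integral_ge0 ?andbT; last first.
  by move=> x _; rewrite lee_fin ltW.
apply: contra muT_neq0 => /eqP int0.
have : (\int[mu]_x `|(f x)%:E|)%E = 0%E.
  by rewrite -int0; apply: eq_integral => x _; rewrite gee0_abs // lee_fin ltW.
move/(ae_eq_integral_abs mu measurableT mf) => [N [mN muN0 sub]].
rewrite -measure_le0 -muN0 le_measure ?inE //.
by move=> x _; apply: sub => /= /(_ I) /eqP; rewrite eqe gt_eqF.
Qed.

Lemma ip_suml (R : realType) (m d : nat) (I : finType) (A : {pred I})
    (alpha : I -> R) (u : I -> 'I_m -> 'I_d -> R) (v : 'I_m -> 'I_d -> R) :
  ip (fun i k => \sum_(w in A) alpha w * u w i k) v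
  = \sum_(w in A) alpha w * ip (u w) v.
Proof.
rewrite /ip; under [RHS]eq_bigr do rewrite mulr_sumr.
rewrite [RHS]exchange_big /=; apply: eq_bigr => i _.
under [RHS]eq_bigr do rewrite mulr_sumr.
rewrite [RHS]exchange_big /=; apply: eq_bigr => k _.
by rewrite mulr_suml; apply: eq_bigr => w _; rewrite mulrA.
Qed.

Lemma Ztrain_sub_Zcross {m d : nat} (Ztrain : {set attr m d}) :
  {subset Ztrain <= Zcross Ztrain}.
Proof.
move=> w wT; rewrite inE; apply/forallP => i; apply/existsP.
by exists w; rewrite wT eqxx.
Qed.

Lemma box_measurable (R : realType) (n : nat) (a b : n.-tuple R) :
  measurable (box a b).
Proof.
have -> : box a b = \bigcap_(i in [set: 'I_n])
    (setT `&` ((fun x : n.-tuple R => tnth x i) @^-1` `[tnth a i, tnth b i[)).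
  apply/seteqP; split => x /=.
    by move=> hx i _; split => //=; rewrite in_itv /=; exact: hx.
  by move=> hx i; have [_ /=] := hx i I; rewrite in_itv.
apply: fin_bigcap_measurable; first exact: finite_finset.
by move=> i _; apply: measurable_tnth => //; exact: measurable_itv.
Qed.

Section AdditiveEnergy.
Variables (R : realType) (n m d : nat).
Variable mu : {measure set (n.-tuple R) -> \bar R}.
Implicit Types (F G : n.-tuple R -> 'I_m -> 'I_d -> R) (z : attr m d).

Lemma is_lebesgue_setT_neq0 : is_lebesgue mu -> mu setT != 0%E.
Proof.
move=> Hmu; pose a := [tuple (0 : R) | i < n]; pose b := [tuple (1 : R) | i < n].
have unit_cube : mu (box a b) = 1%E.
  rewrite Hmu => [|i]; last by rewrite !tnth_mktuple ler01.
  by rewrite big1 // => i _; rewrite !tnth_mktuple subr0.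
apply/eqP => muT0; have : (mu (box a b) <= mu setT)%E.
  by rewrite le_measure ?inE //; exact: box_measurable.
by rewrite unit_cube muT0 lee_fin ler10.
Qed.

Lemma measurable_energy_weight F z :
  (forall i k, measurable_fun setT (fun x => F x i k)) ->
  measurable_fun setT (fun x => (expR (- ip (onehot z) (F x)))%:E).
Proof.
move=> mF; apply/measurable_EFinP; apply: measurableT_comp; first exact: measurable_expR.
apply: measurable_funN; apply: measurable_sum => i; apply: measurable_sum => k.
by apply: measurable_funM; [exact: measurable_cst | exact: mF].
Qed.

Lemma partZ_fine_gt0 F z : is_lebesgue mu ->
  (forall i k, measurable_fun setT (fun x => F x i k)) ->
  (partZ mu F z < +oo)%E -> 0 < fine (partZ mu F z).
Proof.
move=> Hmu mF finZ; apply: fine_gt0; rewrite finZ andbT.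
apply: integral_gt0 => [|x|]; last exact: is_lebesgue_setT_neq0.
  exact: measurable_energy_weight.
exact: expR_gt0.
Qed.

Lemma aed_eq_energy_shift F G z :
  0 < fine (partZ mu F z) -> 0 < fine (partZ mu G z) ->
  aed mu G z = aed mu F z ->
  forall x, ip (onehot z) (G x)
            = ip (onehot z) (F x) - ln (fine (partZ mu G z) / fine (partZ mu F z)).
Proof.
move=> ZF_gt0 ZG_gt0 eq_aed x; have := congr1 (fun p => p x) eq_aed; rewrite /aed.
set eF := ip _ (F x); set eG := ip _ (G x).
set ZF := fine (partZ mu F z); set ZG := fine (partZ mu G z) => eq_x.
have : expR (- eG) = expR (ln (ZG / ZF) - eF).
  rewrite expRD lnK ?posrE ?divr_gt0 //.
  apply: (mulfI (invr_neq0 (lt0r_neq0 ZG_gt0))); rewrite eq_x.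
  by rewrite -mulrA mulKf ?lt0r_neq0.
by move/expR_inj => eq_energy; rewrite -[eG]opprK eq_energy opprB.
Qed.

Lemma aed_energy_shift F G z (c : R) :
  (forall i k, measurable_fun setT (fun x => F x i k)) ->
  (forall x, ip (onehot z) (G x) = ip (onehot z) (F x) - c) ->
  aed mu G z = aed mu F z.
Proof.
move=> mF shift.
have weight x : expR (- ip (onehot z) (G x))
                = expR c * expR (- ip (onehot z) (F x)).
  by rewrite shift opprB expRD.
have partZ_shift : partZ mu G z = ((expR c)%:E * partZ mu F z)%E.
  rewrite /partZ -ge0_integralZl_EFin ?expR_ge0 //; last first.
    exact: measurable_energy_weight.
  by apply: eq_integral => x _; rewrite weight EFinM.
apply/funext => x; rewrite /aed partZ_shift fine_pEFinMl ?expR_gt0 // weight.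
by rewrite invfM mulrACA mulVf ?mul1r // gt_eqF ?expR_gt0.
Qed.

End AdditiveEnergy.

Theorem theorem1 (R : realType) (n m d : nat)
    (mu : {measure set (n.-tuple R) -> \bar R}) (Hmu : is_lebesgue mu)
    (Ztrain : {set attr m d})
    (E Ehat : n.-tuple R -> 'I_m -> 'I_d -> R)
    (mE : forall i k, measurable_fun setT (fun x => E x i k))
    (mEhat : forall i k, measurable_fun setT (fun x => Ehat x i k))
    (finZ : forall z, z \in Zcross Ztrain -> (partZ mu E z < +oo)%E)
    (finZhat : forall z, z \in Zcross Ztrain -> (partZ mu Ehat z < +oo)%E)
    (Htrain : forall z, z \in Ztrain -> aed mu Ehat z = aed mu E z) :
  forall z', DAff (R := R) Ztrain z' -> aed mu Ehat z' = aed mu E z'.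
Proof.
move=> z' [alpha [_ onehot_z']].
pose c w := ln (fine (partZ mu Ehat w) / fine (partZ mu E w)).
have shift_train w x : w \in Ztrain ->
    ip (onehot w) (Ehat x) = ip (onehot w) (E x) - c w.
  move=> wT; have wX : w \in Zcross Ztrain by exact: Ztrain_sub_Zcross.
  apply: aed_eq_energy_shift; rewrite ?Htrain //.
    exact: partZ_fine_gt0 Hmu mE (finZ w wX).
  exact: partZ_fine_gt0 Hmu mEhat (finZhat w wX).
pose C := \sum_(w in Ztrain) alpha w * c w.
apply: (@aed_energy_shift _ _ _ _ mu E Ehat z' C mE).
move=> x; have -> : onehot z' = fun i k => \sum_(w in Ztrain) alpha w * onehot w i k.
  by apply/funext => i; apply/funext => k; exact: onehot_z'.
rewrite !ip_suml -sumrB; apply: eq_bigr => w wT.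
by rewrite shift_train // mulrBr.
Qed.
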